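(* $K(6)=9$.
   Context: Electricity division instance: supply $S>0$ and demands $D=(D[1],\dots,D[n])$ with $0<D[i]\le S$. A schedule partitions the time interval into finitely many subintervals, each assigned a set of households whose total demand is at most $S$; the egalitarian connection-time is the maximum, over schedules, of the minimum over households of the fraction of time the household is connected. For an integer $k\ge1$, a $k$-times bin packing of $D$ assigns $k$ copies of each household (item of size $D[i]$) to bins so that each bin has total size at most $S$ and no bin contains two copies of the same item; $OPT(D_k)$ is the minimum number of bins. $K(D)$ is the smallest positive integer $k$ such that the egalitarian connection-time of the instance equals $k/OPT(D_k)$, and $K(n)$ is the maximum of $K(D)$ over all instances with $n$ households. *)

From Stdlib Require Import Reals.
From HB Require Import structures.
From mathcomp Require Import all_boot all_order all_algebra.
From mathcomp Require Import Rstruct.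
Set Implicit Arguments. Unset Strict Implicit. Unset Printing Implicit Defensive.
Import Order.TTheory GRing.Theory Num.Theory.
Local Open Scope ring_scope.

Section ElectricityDivision.
Variable n : nat.

Definition valid_instance (S : R) (D : 'I_n -> R) : Prop :=
  0 < S /\ forall i, 0 < D i /\ D i <= S.

Definition feasible (S : R) (D : 'I_n -> R) (A : {set 'I_n}) : bool :=
  \sum_(i in A) D i <= S.

(* A schedule: the time interval (normalised to length 1) is partitioned into
   finitely many subintervals, listed as (length, connected set) pairs; each
   subinterval has positive length, the lengths sum to 1, and each assigned
   set is feasible. *)
Definition is_schedule (S : R) (D : 'I_n -> R)
    (sch : seq (R * {set 'I_n})) : Prop :=
  (forall p, p \in sch -> 0 < p.1 /\ feasible S D p.2) /\
  \sum_(p <- sch) p.1 = 1.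

Definition conn_time (sch : seq (R * {set 'I_n})) (i : 'I_n) : R :=
  \sum_(p <- sch | i \in p.2) p.1.

(* t is the egalitarian connection-time: the maximum over schedules of the
   minimum over households of the connection time. *)
Definition egal_time (S : R) (D : 'I_n -> R) (t : R) : Prop :=
  (exists sch, is_schedule S D sch /\ forall i, t <= conn_time sch i) /\
  (forall sch, is_schedule S D sch -> exists i, conn_time sch i <= t).

(* A k-times bin packing: a list of bins, each a set of items (so no bin
   contains two copies of the same item) of total size at most S, such that
   every item occurs in exactly k bins. *)
Definition k_packing (S : R) (D : 'I_n -> R) (k : nat)
    (P : seq {set 'I_n}) : Prop :=
  (forall B, B \in P -> feasible S D B) /\
  (forall i, count (fun B : {set 'I_n} => i \in B) P = k).

Definition is_OPT (S : R) (D : 'I_n -> R) (k m : nat) : Prop :=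
  (exists P, k_packing S D k P /\ size P = m) /\
  (forall P, k_packing S D k P -> (m <= size P)%N).

Definition K_property (S : R) (D : 'I_n -> R) (k : nat) : Prop :=
  exists (t : R) (m : nat), egal_time S D t /\ is_OPT S D k m /\
    t = (k%:R / m%:R).

Definition is_K_of (S : R) (D : 'I_n -> R) (k : nat) : Prop :=
  (0 < k)%N /\ K_property S D k /\
  (forall k', (0 < k')%N -> (k' < k)%N -> ~ K_property S D k').

Definition is_K_n (k : nat) : Prop :=
  (forall S D, valid_instance S D -> exists kD, is_K_of S D kD /\ (kD <= k)%N) /\
  (exists S D, valid_instance S D /\ is_K_of S D k).

End ElectricityDivision.

(* Upper bound: relabel the households so that the demands increase.  The
   feasible sets then form a family of subsets of the six households that
   contains every singleton and is closed under removing a household and under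
   replacing a household by one of smaller index.  Each of the finitely many
   such families is certified by an entry of a list of certificates: a
   k-packing with m bins, k <= 9, together with a dual weighting of the
   households of total m/k under which every feasible set weighs at most 1.
   By weak LP duality the egalitarian time is then k/m and OPT(D_k) = m, so
   K(D) <= k <= 9.
   Lower bound: for supply 43 and demands (1, 1, 2, 20, 21, 22) there is such a
   certificate with k = 9 and m = 16; as 9/16 is in lowest terms, no k' < 9
   satisfies k'/OPT(D_k') = 9/16. *)

From Stdlib Require Import Reals Classical.
From mathcomp Require Import all_boot all_order all_algebra perm.
From mathcomp Require Import Rstruct.
Set Implicit Arguments. Unset Strict Implicit. Unset Printing Implicit Defensive.
Import Order.TTheory GRing.Theory Num.Theory.
Local Open Scope ring_scope.

Section Certificates.
Variables (n : nat) (S : R) (D : 'I_n -> R).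

(* [y] is a solution of the dual of the linear program defining the
   egalitarian time. *)
Definition optimality_certificate (k m : nat) : Prop :=
  [/\ (0 < k)%N, (0 < m)%N,
      (exists2 P, k_packing S D k P & size P = m) &
      exists2 y : 'I_n -> R, forall i, 0 <= y i &
        (forall B, feasible S D B -> \sum_(i in B) y i <= 1) /\
        k%:R * \sum_i y i = m%:R].

Lemma sum_incidence_exchange (T : Type) (s : seq T) (mem : T -> 'I_n -> bool)
    (w : T -> R) (y : 'I_n -> R) :
  \sum_i y i * \sum_(p <- s | mem p i) w p = \sum_(p <- s) w p * \sum_(i | mem p i) y i.
Proof.
under eq_bigr => i _ do rewrite big_mkcond mulr_sumr.
rewrite exchange_big /=; apply: eq_bigr => p _.
rewrite [in RHS]big_mkcond [in RHS]mulr_sumr; apply: eq_bigr => i _ /=.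
by case: (mem p i); rewrite ?mulr0 // mulrC.
Qed.

Variables (k m : nat).
Hypothesis cert : optimality_certificate k m.

Lemma certificate_schedule :
  exists2 sch, is_schedule S D sch & forall i, k%:R / m%:R <= conn_time sch i.
Proof.
have [_ m_gt0 [P [P_feas P_count] P_size] _] := cert.
exists [seq (m%:R^-1, B) | B <- P]; first split.
- move=> _ /mapP[B BP ->] /=; split; last exact: P_feas.
  by rewrite invr_gt0 ltr0n.
- by rewrite big_map big_const_seq iter_addr_0 count_predT P_size
    -[m%:R^-1 *+ m]mulr_natr mulVf // pnatr_eq0 -lt0n.
- move=> i; rewrite /conn_time big_map big_const_seq iter_addr_0 /= P_count.
  by rewrite mulrC mulr_natr.
Qed.

Lemma certificate_schedule_bound sch :
  is_schedule S D sch -> exists i, conn_time sch i <= k%:R / m%:R.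
Proof.
have [k_gt0 m_gt0 _ [y y_ge0 [y_feas y_sum]]] := cert.
move=> [sch_feas sch_len].
have weighted_le1 : \sum_i y i * conn_time sch i <= 1.
  rewrite (sum_incidence_exchange sch (fun p i => i \in p.2) (fun p => p.1)).
  rewrite -sch_len big_seq [X in _ <= X]big_seq; apply: ler_sum => p.
  by move=> /sch_feas[p_gt0 p_feas]; rewrite ler_piMr ?(ltW p_gt0) ?y_feas.
have weighted_avg : \sum_i y i * (k%:R / m%:R) = 1.
  by rewrite -mulr_suml mulrA [_ * k%:R]mulrC y_sum mulfV // pnatr_eq0 -lt0n.
have [j y_j_gt0] : exists j, 0 < y j.
  apply/existsP; apply: contraLR m_gt0 => /existsPn /= y_le0.
  rewrite -(ltr_nat R) -y_sum big1 ?mulr0 ?ltxx // => i _.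
  by apply/eqP; rewrite eq_le y_ge0 andbT leNgt y_le0.
case: (boolP [exists i, conn_time sch i <= k%:R / m%:R]) => [/existsP // | ].
move=> /existsPn /= above; suff : 1 < 1 :> R by rewrite ltxx.
rewrite -[X in X < _]weighted_avg; apply: lt_le_trans weighted_le1.
rewrite [X in X < _](bigD1 j) // [X in _ < X](bigD1 j) //=.
apply: ltr_leD; first by rewrite ltr_pM2l // ltNge above.
by apply: ler_sum => i _; rewrite ler_wpM2l // ltW // ltNge above.
Qed.

Lemma certificate_egal_time : egal_time S D (k%:R / m%:R).
Proof.
split; last exact: certificate_schedule_bound.
by have [sch] := certificate_schedule; exists sch.
Qed.

Lemma certificate_is_OPT : is_OPT S D k m.
Proof.
have [_ _ [P P_pack P_size] [y _ [y_feas y_sum]]] := cert.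
split=> [|Q [Q_feas Q_count]]; first by exists P.
have m_eq : m%:R = \sum_(B <- Q) \sum_(i in B) y i :> R.
  rewrite -y_sum mulr_sumr.
  have := sum_incidence_exchange Q (fun B i => i \in B) (fun _ => 1) y.
  under eq_bigr => i _ do rewrite big_const_seq iter_addr_0 Q_count.
  under [in RHS]eq_bigr => B _ do rewrite mul1r.
  by move=> <-; apply: eq_bigr => i _; rewrite mulr_natr mulr_natl.
rewrite -(ler_nat R) m_eq -sum1_size natr_sum big_seq [X in _ <= X]big_seq.
by apply: ler_sum => B /Q_feas /y_feas.
Qed.

Lemma certificate_K_property : K_property S D k.
Proof.
exists (k%:R / m%:R), m.
by split; [exact: certificate_egal_time | split; [exact: certificate_is_OPT |]].
Qed.

End Certificates.

Section KOf.
Variables (n : nat) (S : R) (D : 'I_n -> R).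

Lemma egal_time_unique t1 t2 : egal_time S D t1 -> egal_time S D t2 -> t1 = t2.
Proof.
move=> [[sch1 [sch1_ok above1]] below1] [[sch2 [sch2_ok above2]] below2].
have [i le_i] := below2 sch1 sch1_ok; have [j le_j] := below1 sch2 sch2_ok.
by apply/eqP; rewrite eq_le (le_trans (above1 i) le_i) (le_trans (above2 j) le_j).
Qed.

Lemma exists_K_of_le k : (0 < k)%N -> K_property S D k ->
  exists kD, is_K_of S D kD /\ (kD <= k)%N.
Proof.
elim/ltn_ind: k => k IH k_gt0 Kk.
case: (classic (exists2 k', (0 < k' < k)%N & K_property S D k')).
  move=> [k' /andP[k'_gt0 lt_k'k] Kk'].
  have [kD [KD le_kDk']] := IH k' lt_k'k k'_gt0 Kk'.
  by exists kD; split; last exact: leq_trans le_kDk' (ltnW lt_k'k).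
move=> no_smaller; exists k; split=> //; split=> //; split=> // k' k'_gt0 lt_k'k Kk'.
by apply: no_smaller; exists k'; rewrite ?k'_gt0.
Qed.

(* The egalitarian time is unique, so any k' with the K-property satisfies
   k' / m' = k / m; coprimality then forces k <= k'. *)
Lemma certificate_is_K_of k m :
  optimality_certificate S D k m -> coprime k m -> is_K_of S D k.
Proof.
move=> cert co_km; have [k_gt0 m_gt0 _ _] := cert.
split=> //; split=> [|k' k'_gt0 lt_k'k [t [m' [t_egal [_ t_eq]]]]].
  exact: certificate_K_property cert.
have := egal_time_unique (certificate_egal_time cert) t_egal; rewrite t_eq.
have [-> | m'_gt0] := posnP m'.
  by rewrite invr0 mulr0 => /eqP; rewrite mulf_eq0 invr_eq0 !pnatr_eq0 !eqn0Ngt k_gt0 m_gt0.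
move/eqP; rewrite eqr_div ?pnatr_eq0 -?lt0n // -!natrM eqr_nat => /eqP km'_eq.
have : (k %| k' * m)%N by rewrite -km'_eq dvdn_mulr.
by rewrite Gauss_dvdl // => /(dvdn_leq k'_gt0); rewrite leqNgt lt_k'k.
Qed.

End KOf.

Lemma certificate_relabel n S (D : 'I_n -> R) (p : {perm 'I_n}) k m :
  optimality_certificate S (D \o p) k m -> optimality_certificate S D k m.
Proof.
have sum_image (q : {perm 'I_n}) (F : 'I_n -> R) (B : {set 'I_n}) :
    \sum_(i in q @: B) F i = \sum_(i in B) F (q i).
  by rewrite big_imset //; move=> i j _ _ /perm_inj.
case=> k_gt0 m_gt0 [P [P_feas P_count] P_size] [y y_ge0 [y_feas y_sum]].
split=> //.
  exists [seq p @: B | B : {set 'I_n} <- P]; last by rewrite size_map.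
  split=> [_ /mapP[B BP ->] | i]; first by rewrite /feasible sum_image; apply: P_feas.
  rewrite count_map -(P_count ((p^-1)%g i)); apply: eq_count => B /=.
  by rewrite -{1}(permKV p i) mem_imset //; apply: perm_inj.
exists (y \o (p^-1)%g) => [i|]; first exact: y_ge0.
split=> [B B_feas|]; last first.
  by rewrite -y_sum (reindex_inj (@perm_inj _ p)) /=; under eq_bigr do rewrite permK.
have := y_feas ((p^-1)%g @: B); rewrite /feasible !sum_image /=.
by under eq_bigr do rewrite permKV; apply.
Qed.

Lemma sorting_perm n (D : 'I_n -> R) :
  exists p : {perm 'I_n}, {homo D \o p : i j / (i <= j)%N >-> i <= j}.
Proof.
case: n D => [|n] D; first by exists 1%g => -[].
pose leD a b := D a <= D b.
pose s := sort leD (enum 'I_n.+1).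
have s_size : size s = n.+1 by rewrite size_sort size_enum_ord.
have s_sorted : sorted leD s by apply: sort_sorted => a b; exact: le_total.
have f_inj : injective (fun i : 'I_n.+1 => nth ord0 s i).
  move=> i j /eqP; rewrite nth_uniq ?s_size ?sort_uniq ?enum_uniq //.
  by move=> /eqP /val_inj.
exists (perm f_inj) => i j le_ij /=; rewrite !permE.
apply: (sorted_leq_nth _ _ ord0 s_sorted); rewrite ?inE ?s_size //.
- by move=> b a c; exact: le_trans.
- by move=> a; exact: lexx.
Qed.

Lemma feasible_subset n S (D : 'I_n -> R) (A B : {set 'I_n}) :
  (forall i, 0 <= D i) -> A \subset B -> feasible S D B -> feasible S D A.
Proof.
move=> D_ge0 /setIidPr AB; apply: le_trans.
by rewrite [X in _ <= X](big_setID A) /= AB lerDl sumr_ge0.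
Qed.

Lemma feasible_exchange n S (D : 'I_n -> R) (A : {set 'I_n}) i j :
  D i <= D j -> j \in A -> i \notin A -> feasible S D A -> feasible S D (i |: (A :\ j)).
Proof.
move=> le_ij jA iA; apply: le_trans.
rewrite big_setU1 ?inE ?(negbTE iA) ?andbF //= [X in _ <= X](big_setD1 j) //=.
by rewrite lerD2r.
Qed.

Definition bit (x i : nat) : bool := odd (x %/ 2 ^ i)%N.

Definition set_of_code (x : nat) : {set 'I_6} := [set i : 'I_6 | bit x i].

Lemma set_of_code_onto (A : {set 'I_6}) : exists2 x, (x < 64)%N & A = set_of_code x.
Proof.
pose b i := (inord i : 'I_6) \in A.
pose code (c : nat -> bool) := (c 0 + 2 * c 1 + 4 * c 2 + 8 * c 3 + 16 * c 4 + 32 * c 5)%N.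
have code_lt64 (c : nat -> bool) : (code c < 64)%N.
  by rewrite /code; case: (c 0); case: (c 1); case: (c 2); case: (c 3); case: (c 4); case: (c 5).
have bit_code (c : nat -> bool) (i : 'I_6) : bit (code c) i = c i.
  rewrite /code; case: i => -[|[|[|[|[|[|//]]]]]] ?;
  by case: (c 0); case: (c 1); case: (c 2); case: (c 3); case: (c 4); case: (c 5).
exists (code b) => //; apply/setP => i; rewrite inE bit_code /b.
by congr (_ \in A); apply: val_inj; rewrite /= inordK.
Qed.

Lemma set_of_code_pow2 (i : 'I_6) : set_of_code (2 ^ i)%N = [set i].
Proof.
apply/setP => j; rewrite !inE -(inj_eq val_inj).
by case: i j => -[|[|[|[|[|[|//]]]]]] ? -[[|[|[|[|[|[|//]]]]]] ?].
Qed.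

Definition code_weight (ws : seq nat) (x : nat) : nat :=
  sumn [seq nth 0%N ws i | i <- iota 0 6 & bit x i].

Lemma natr_code_weight ws x :
  (code_weight ws x)%:R = \sum_(i in set_of_code x) (nth 0%N ws i)%:R :> R.
Proof.
rewrite /code_weight sumnE big_map big_filter natr_sum -[iota 0 6]/(index_iota 0 6).
rewrite big_mkord.
by apply: eq_bigl => i; rewrite inE.
Qed.

(* The dual weighting of household [i] is [nth 0 cert_weights i / cert_scale];
   the bins of the packing are given by their codes. *)
Record certificate := Certificate {
  cert_k : nat; cert_bins : seq nat; cert_weights : seq nat; cert_scale : nat }.

Definition certificate_ok (c : certificate) : bool :=
  let: Certificate k bins ws L := c in
  [&& 0 < k, 0 < L, all (fun i => count (bit^~ i) bins == k) (iota 0 6) &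
      k * code_weight ws 63 == size bins * L]%N.

Definition dual_region (c : certificate) : seq bool :=
  mkseq (fun x => code_weight (cert_weights c) x <= cert_scale c)%N 64.

Definition between (bins : seq nat) (F : seq bool) (region : seq bool) : bool :=
  all (nth false F) bins && all2 implb F region.

Lemma all2_implb_nth (s t : seq bool) x :
  all2 implb s t -> nth false s x -> nth false t x.
Proof.
elim: s t x => [|a s IH] [|b t] [|x] //= /andP[ab st]; first exact: implyP.
exact: IH.
Qed.

Lemma certificate_optimality S (D : 'I_6 -> R) (fam : nat -> bool) c :
  (forall x, (x < 64)%N -> fam x = feasible S D (set_of_code x)) ->
  certificate_ok c -> between (cert_bins c) (mkseq fam 64) (dual_region c) ->
  optimality_certificate S D (cert_k c) (size (cert_bins c)).
Proof.
case: c => k bins ws L famE /and4P[k_gt0 L_gt0 /allP bins_count /eqP k_total].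
move=> /andP[/allP bins_fam /all2_implb_nth fam_region].
have fam_feasible x : nth false (mkseq fam 64) x -> feasible S D (set_of_code x).
  case: (ltnP x 64) => [x_lt | x_ge]; last by rewrite nth_default ?size_mkseq.
  by rewrite nth_mkseq // famE.
have L_neq0 : L%:R != 0 :> R by rewrite pnatr_eq0 -lt0n.
split=> //.
- by rewrite (leq_trans k_gt0) // -(eqP (bins_count 0%N _)) ?count_size.
- exists [seq set_of_code b | b <- bins]; last by rewrite size_map.
  split=> [_ /mapP[b /bins_fam b_in ->] | i]; first exact: fam_feasible.
  rewrite count_map -(eqP (bins_count i _)); last by rewrite mem_iota ltn_ord.
  by apply: eq_count => b; rewrite /= inE.
exists (fun i : 'I_6 => (nth 0%N ws i)%:R / L%:R) => [i|]; first by rewrite divr_ge0.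
split=> [B|].
  have [x x_lt64 ->] := set_of_code_onto B => x_feas.
  rewrite -mulr_suml -natr_code_weight ler_pdivrMr ?ltr0n // mul1r ler_nat.
  by have := fam_region x; rewrite /dual_region !nth_mkseq // famE //; apply.
rewrite -mulr_suml.
have -> : \sum_(i < 6) ((nth 0%N ws i)%:R : R) = (code_weight ws 63)%:R.
  by rewrite natr_code_weight; apply: eq_bigl => i; rewrite inE; case: i => -[|[|[|[|[|[|//]]]]]].
by rewrite mulrA -natrM k_total natrM mulfK.
Qed.

(* The codes of the sets obtained from the set coded by [x] by removing a
   household or by replacing household [i.+1] by household [i]. *)
Definition shifts (x : nat) : seq nat :=
  ([seq x - 2 ^ i | i <- iota 0 6 & bit x i] ++
   [seq x - 2 ^ i.+1 + 2 ^ i | i <- iota 0 5 & bit x i.+1 && ~~ bit x i])%N.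

Definition code_subset (y x : nat) : bool := all (fun k => bit y k ==> bit x k) (iota 0 6).

Definition code_exchange (y x i : nat) : bool :=
  [&& bit x i.+1, ~~ bit x i &
      all (fun k => bit y k == (k == i) || (k != i.+1) && bit x k) (iota 0 6)].

Lemma shifts_spec :
  all (fun x => all (fun y => (y < x)%N && (code_subset y x || has (code_exchange y x) (iota 0 5)))
                    (shifts x))
      (iota 0 64).
Proof. by vm_compute. Qed.

Lemma shiftsP x y : (x < 64)%N -> y \in shifts x ->
  (y < x)%N && (code_subset y x || has (code_exchange y x) (iota 0 5)).
Proof.
move=> x_lt64; move/allP: shifts_spec => /(_ x); rewrite mem_iota x_lt64 => /(_ isT).
by move/allP; apply.
Qed.

Lemma feasible_shifts S (D : 'I_6 -> R) x y :
  (forall i, 0 <= D i) -> {homo D : i j / (i <= j)%N >-> i <= j} ->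
  (x < 64)%N -> y \in shifts x ->
  feasible S D (set_of_code x) -> feasible S D (set_of_code y).
Proof.
move=> D_ge0 D_sorted x_lt64 /(shiftsP x_lt64) /andP[_ /orP[/allP sub | /hasP[i]]].
  apply: feasible_subset => //; apply/subsetP => k; rewrite !inE.
  by apply/implyP/sub; rewrite mem_iota ltn_ord.
rewrite mem_iota => /andP[_ i_lt5] /and3P[x_i1 x_i /allP y_bits].
have i_lt6 : (i < 6)%N by apply: ltnW.
have -> : set_of_code y = inord i |: (set_of_code x :\ inord i.+1).
  apply/setP => k; rewrite !inE -!(inj_eq val_inj) /= !inordK //.
  by apply/eqP/y_bits; rewrite mem_iota ltn_ord.
apply: feasible_exchange; rewrite ?inE ?inordK //.
by apply: D_sorted; rewrite !inordK.
Qed.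

(* Decides [P] on all families of sets closed under [shifts], given as bit
   vectors indexed by codes and built in increasing order of codes, extending
   [acc] by [fuel] bits.  The [if] is essential: [vm_compute] evaluates both
   arguments of [==>], and would then explore non-closed families too. *)
Fixpoint all_closed_families (P : seq bool -> bool) (fuel : nat) (acc : seq bool) : bool :=
  if fuel is f.+1 then
    all_closed_families P f (rcons acc false) &&
    (if all (nth false acc) (shifts (size acc)) then all_closed_families P f (rcons acc true)
     else true)
  else P acc.

Lemma all_closed_familiesP (P : seq bool -> bool) (fam : nat -> bool) :
  (forall x y, (x < 64)%N -> y \in shifts x -> fam x -> fam y) ->
  all_closed_families P 64 [::] -> P (mkseq fam 64).
Proof.
move=> fam_closed.
suff search fuel acc : (size acc + fuel = 64)%N -> acc = mkseq fam (size acc) ->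
    all_closed_families P fuel acc -> P (mkseq fam 64) by exact: search.
elim: fuel acc => [|fuel IH] acc /=; first by rewrite addn0 => <- <-.
move=> acc_size acc_fam /andP[search_false search_true].
have x_lt64 : (size acc < 64)%N by rewrite -acc_size addnS ltnS leq_addr.
have extend b : b = fam (size acc) ->
    all_closed_families P fuel (rcons acc b) -> P (mkseq fam 64).
  move=> b_eq; apply: IH; first by rewrite size_rcons addSnnS.
  by rewrite b_eq size_rcons mkseqS -acc_fam.
case fam_x : (fam (size acc)); last exact: (extend false).
apply: (extend true) => //; move: search_true.
suff -> : all (nth false acc) (shifts (size acc)) by [].
apply/allP => y y_in; have /andP[y_lt _] := shiftsP x_lt64 y_in.
by rewrite acc_fam nth_mkseq // (fam_closed _ _ x_lt64 y_in).
Qed.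

(* Each entry comes from an optimal primal-dual pair of the linear program of
   some closed family. *)
Definition certificates : seq certificate := [::
  Certificate 1 [:: 1; 2; 4; 8; 16; 32] [:: 1; 1; 1; 1; 1; 1] 1;
  Certificate 1 [:: 3; 4; 8; 16; 32] [:: 0; 1; 1; 1; 1; 1] 1;
  Certificate 2 [:: 3; 5; 6; 8; 8; 16; 16; 32; 32] [:: 1; 1; 1; 2; 2; 2] 2;
  Certificate 1 [:: 3; 12; 16; 32] [:: 1; 1; 1; 1; 2; 2] 2;
  Certificate 1 [:: 6; 9; 16; 32] [:: 0; 0; 1; 1; 1; 1] 1;
  Certificate 1 [:: 7; 8; 16; 32] [:: 1; 0; 0; 1; 1; 1] 1;
  Certificate 3 [:: 7; 7; 9; 10; 12; 16; 16; 16; 32; 32; 32] [:: 1; 1; 1; 2; 3; 3] 3;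
  Certificate 2 [:: 6; 10; 12; 17; 17; 32; 32] [:: 0; 1; 1; 1; 2; 2] 2;
  Certificate 2 [:: 6; 10; 12; 17; 17; 32; 32] [:: 1; 1; 1; 1; 1; 2] 2;
  Certificate 2 [:: 7; 11; 12; 16; 16; 32; 32] [:: 0; 1; 1; 1; 2; 2] 2;
  Certificate 3 [:: 7; 10; 12; 12; 17; 17; 18; 32; 32; 32] [:: 1; 1; 1; 2; 2; 3] 3;
  Certificate 3 [:: 7; 11; 13; 14; 16; 16; 16; 32; 32; 32] [:: 1; 1; 1; 1; 3; 3] 3;
  Certificate 4 [:: 7; 11; 12; 12; 12; 17; 17; 18; 18; 32; 32; 32; 32] [:: 1; 1; 2; 2; 3; 4] 4;
  Certificate 1 [:: 7; 24; 32] [:: 0; 1; 1; 1; 1; 2] 2;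
  Certificate 1 [:: 11; 20; 32] [:: 0; 0; 0; 1; 1; 1] 1;
  Certificate 1 [:: 12; 18; 33] [:: 0; 0; 0; 1; 1; 1] 1;
  Certificate 1 [:: 12; 18; 33] [:: 1; 1; 1; 1; 1; 1] 2;
  Certificate 1 [:: 12; 19; 32] [:: 0; 0; 1; 0; 1; 1] 1;
  Certificate 1 [:: 13; 18; 32] [:: 1; 1; 1; 1; 2; 3] 3;
  Certificate 1 [:: 14; 17; 32] [:: 0; 0; 1; 0; 1; 1] 1;
  Certificate 1 [:: 15; 16; 32] [:: 1; 0; 0; 0; 1; 1] 1;
  Certificate 5 [:: 13; 13; 14; 14; 19; 19; 19; 20; 24; 32; 32; 32; 32; 32]
    [:: 1; 1; 2; 2; 3; 5] 5;
  Certificate 4 [:: 7; 7; 12; 20; 24; 24; 24; 33; 33; 34; 34] [:: 1; 1; 2; 2; 2; 3] 4;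
  Certificate 4 [:: 11; 14; 14; 19; 21; 21; 24; 32; 32; 32; 32] [:: 1; 1; 1; 2; 2; 4] 4;
  Certificate 4 [:: 15; 15; 15; 17; 18; 20; 24; 32; 32; 32; 32] [:: 1; 1; 1; 1; 3; 4] 4;
  Certificate 3 [:: 7; 7; 24; 24; 24; 33; 34; 36] [:: 1; 1; 1; 1; 2; 2] 3;
  Certificate 3 [:: 7; 13; 20; 24; 24; 33; 34; 34] [:: 1; 1; 1; 1; 2; 2] 3;
  Certificate 3 [:: 14; 14; 18; 20; 24; 33; 33; 33] [:: 0; 1; 1; 1; 2; 3] 3;
  Certificate 3 [:: 14; 14; 19; 21; 25; 32; 32; 32] [:: 1; 1; 1; 1; 1; 3] 3;
  Certificate 3 [:: 15; 15; 19; 20; 24; 32; 32; 32] [:: 0; 1; 1; 1; 2; 3] 3;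
  Certificate 5 [:: 13; 13; 13; 19; 20; 20; 24; 24; 33; 34; 34; 34; 34] [:: 1; 1; 2; 2; 3; 4] 5;
  Certificate 5 [:: 15; 15; 15; 19; 21; 22; 24; 24; 32; 32; 32; 32; 32] [:: 1; 1; 1; 2; 3; 5] 5;
  Certificate 2 [:: 7; 7; 24; 40; 48] [:: 0; 1; 1; 1; 1; 1] 2;
  Certificate 2 [:: 11; 19; 24; 36; 36] [:: 0; 1; 1; 1; 1; 1] 2;
  Certificate 2 [:: 11; 19; 24; 36; 36] [:: 1; 1; 1; 2; 2; 3] 4;
  Certificate 2 [:: 12; 20; 24; 35; 35] [:: 0; 0; 1; 1; 1; 2] 2;
  Certificate 2 [:: 13; 21; 24; 34; 34] [:: 0; 0; 1; 1; 1; 2] 2;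
  Certificate 2 [:: 14; 22; 24; 33; 33] [:: 0; 0; 1; 1; 1; 2] 2;
  Certificate 2 [:: 15; 20; 24; 33; 34] [:: 1; 1; 1; 1; 3; 3] 4;
  Certificate 2 [:: 15; 20; 24; 33; 34] [:: 1; 1; 2; 2; 4; 5] 6;
  Certificate 2 [:: 15; 22; 25; 32; 32] [:: 1; 1; 1; 1; 2; 4] 4;
  Certificate 2 [:: 15; 23; 24; 32; 32] [:: 0; 0; 1; 1; 1; 2] 2;
  Certificate 5 [:: 13; 14; 19; 19; 19; 19; 20; 36; 36; 40; 40; 40] [:: 1; 1; 2; 2; 3; 3] 5;
  Certificate 5 [:: 13; 14; 20; 20; 24; 24; 24; 35; 35; 35; 35; 36] [:: 1; 1; 2; 2; 3; 3] 5;
  Certificate 5 [:: 15; 15; 19; 19; 24; 24; 24; 33; 34; 36; 36; 36] [:: 1; 1; 1; 2; 3; 4] 5;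
  Certificate 5 [:: 15; 15; 23; 23; 25; 26; 28; 32; 32; 32; 32; 32] [:: 1; 1; 1; 2; 2; 5] 5;
  Certificate 3 [:: 7; 11; 13; 14; 48; 48; 48] [:: 1; 1; 1; 1; 1; 2] 3;
  Certificate 3 [:: 14; 19; 21; 21; 34; 40; 40] [:: 0; 1; 1; 1; 2; 2] 3;
  Certificate 3 [:: 14; 19; 21; 21; 34; 40; 40] [:: 1; 1; 1; 1; 1; 2] 3;
  Certificate 3 [:: 14; 21; 24; 24; 35; 35; 36] [:: 0; 1; 1; 1; 2; 2] 3;
  Certificate 3 [:: 14; 21; 24; 24; 35; 35; 36] [:: 1; 1; 2; 3; 3; 4] 6;
  Certificate 3 [:: 14; 21; 25; 25; 34; 34; 36] [:: 0; 1; 1; 1; 2; 2] 3;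
  Certificate 3 [:: 14; 21; 25; 25; 34; 34; 36] [:: 1; 1; 1; 1; 1; 2] 3;
  Certificate 3 [:: 14; 22; 26; 28; 33; 33; 33] [:: 0; 1; 1; 1; 1; 3] 3;
  Certificate 3 [:: 14; 22; 26; 28; 33; 33; 33] [:: 1; 1; 1; 1; 1; 2] 3;
  Certificate 3 [:: 15; 19; 19; 20; 36; 40; 40] [:: 1; 0; 1; 1; 2; 2] 3;
  Certificate 3 [:: 15; 20; 24; 24; 35; 35; 36] [:: 1; 0; 1; 1; 2; 2] 3;
  Certificate 3 [:: 15; 23; 24; 24; 33; 34; 36] [:: 1; 1; 1; 3; 3; 5] 6;
  Certificate 3 [:: 15; 23; 27; 28; 32; 32; 32] [:: 0; 1; 1; 1; 1; 3] 3;
  Certificate 7 [:: 15; 15; 21; 22; 24; 24; 24; 24; 24; 35; 35; 35; 35; 36; 36; 36]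
    [:: 1; 1; 2; 3; 4; 5] 7;
  Certificate 4 [:: 13; 13; 14; 14; 19; 35; 48; 48; 48] [:: 1; 1; 1; 2; 2; 2] 4;
  Certificate 4 [:: 13; 21; 22; 22; 24; 35; 35; 40; 40] [:: 1; 1; 1; 2; 2; 2] 4;
  Certificate 4 [:: 14; 22; 24; 24; 24; 35; 35; 37; 37] [:: 0; 1; 1; 2; 2; 3] 4;
  Certificate 4 [:: 14; 22; 24; 24; 24; 35; 35; 37; 37] [:: 1; 1; 1; 2; 2; 2] 4;
  Certificate 4 [:: 14; 22; 24; 25; 25; 35; 35; 36; 36] [:: 0; 1; 1; 2; 2; 3] 4;
  Certificate 4 [:: 15; 19; 21; 22; 22; 33; 40; 40; 40] [:: 1; 1; 1; 1; 2; 3] 4;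
  Certificate 4 [:: 15; 22; 25; 25; 25; 34; 34; 36; 36] [:: 0; 1; 1; 2; 2; 3] 4;
  Certificate 4 [:: 15; 22; 25; 25; 25; 34; 34; 36; 36] [:: 1; 1; 1; 1; 2; 3] 4;
  Certificate 4 [:: 15; 22; 26; 28; 28; 33; 33; 33; 34] [:: 1; 1; 1; 1; 2; 3] 4;
  Certificate 4 [:: 15; 23; 24; 24; 24; 35; 35; 36; 36] [:: 1; 0; 1; 2; 2; 3] 4;
  Certificate 4 [:: 15; 23; 27; 29; 30; 32; 32; 32; 32] [:: 1; 1; 1; 1; 1; 4] 4;
  Certificate 5 [:: 13; 14; 14; 14; 21; 25; 35; 35; 48; 48; 48] [:: 1; 1; 2; 2; 2; 3] 5;
  Certificate 5 [:: 14; 22; 22; 25; 25; 25; 35; 35; 36; 36; 40] [:: 1; 1; 2; 2; 2; 3] 5;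
  Certificate 5 [:: 14; 22; 25; 25; 25; 26; 35; 35; 36; 36; 36] [:: 1; 1; 2; 2; 2; 3] 5;
  Certificate 5 [:: 15; 21; 21; 22; 22; 24; 35; 35; 40; 40; 40] [:: 1; 1; 1; 2; 3; 3] 5;
  Certificate 5 [:: 15; 22; 24; 24; 24; 24; 35; 35; 37; 37; 38] [:: 1; 1; 1; 2; 3; 3] 5;
  Certificate 5 [:: 15; 23; 25; 26; 26; 26; 33; 33; 36; 36; 36] [:: 1; 1; 1; 2; 2; 4] 5;
  Certificate 5 [:: 15; 23; 26; 28; 28; 28; 33; 33; 33; 34; 34] [:: 1; 1; 1; 2; 2; 4] 5;
  Certificate 6 [:: 14; 14; 14; 14; 19; 25; 25; 35; 37; 37; 48; 48; 48] [:: 1; 2; 2; 2; 3; 3] 6;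
  Certificate 6 [:: 15; 22; 22; 22; 25; 25; 25; 35; 35; 36; 36; 40; 40] [:: 1; 1; 2; 2; 3; 4] 6;
  Certificate 6 [:: 15; 22; 25; 25; 25; 26; 26; 35; 35; 36; 36; 36; 36] [:: 1; 1; 2; 2; 3; 4] 6;
  Certificate 6 [:: 15; 23; 24; 24; 24; 24; 24; 35; 35; 37; 37; 38; 38] [:: 1; 1; 1; 3; 3; 4] 6;
  Certificate 6 [:: 15; 23; 27; 28; 28; 28; 28; 33; 33; 33; 34; 34; 34] [:: 1; 1; 2; 2; 2; 5] 6;
  Certificate 7 [:: 14; 22; 22; 22; 22; 25; 25; 25; 35; 35; 37; 37; 40; 40; 40]
    [:: 1; 2; 2; 3; 3; 4] 7;
  Certificate 7 [:: 15; 23; 25; 25; 25; 26; 26; 26; 35; 35; 36; 36; 36; 36; 36]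
    [:: 1; 1; 2; 3; 3; 5] 7;
  Certificate 8 [:: 15; 22; 22; 22; 22; 22; 25; 25; 25; 35; 35; 37; 37; 40; 40; 40; 40]
    [:: 1; 2; 2; 3; 4; 5] 8;
  Certificate 1 [:: 14; 49] [:: 1; 1; 1; 1; 1; 1] 3;
  Certificate 1 [:: 15; 48] [:: 0; 0; 1; 1; 1; 1] 2;
  Certificate 1 [:: 15; 48] [:: 1; 1; 1; 1; 1; 3] 4;
  Certificate 1 [:: 22; 41] [:: 1; 1; 1; 1; 2; 2] 4;
  Certificate 1 [:: 23; 40] [:: 0; 0; 0; 0; 1; 1] 1;
  Certificate 1 [:: 24; 39] [:: 0; 0; 0; 1; 0; 1] 1;
  Certificate 1 [:: 25; 38] [:: 1; 1; 1; 2; 2; 3] 5;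
  Certificate 1 [:: 26; 37] [:: 0; 1; 1; 1; 1; 2] 3;
  Certificate 1 [:: 27; 36] [:: 0; 0; 0; 1; 0; 1] 1;
  Certificate 1 [:: 28; 35] [:: 0; 1; 1; 1; 1; 2] 3;
  Certificate 1 [:: 29; 34] [:: 0; 0; 1; 0; 0; 1] 1;
  Certificate 1 [:: 30; 33] [:: 0; 1; 0; 0; 0; 1] 1;
  Certificate 1 [:: 31; 32] [:: 1; 0; 0; 0; 0; 1] 1;
  Certificate 9 [:: 23; 23; 23; 23; 26; 26; 28; 28; 38; 38; 38; 41; 41; 41; 41; 41; 48]
    [:: 1; 2; 2; 3; 4; 5] 9;
  Certificate 8 [:: 15; 15; 15; 26; 26; 28; 28; 38; 38; 38; 41; 49; 49; 49; 49]
    [:: 1; 2; 2; 3; 3; 4] 8;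
  Certificate 8 [:: 27; 27; 27; 27; 27; 28; 28; 37; 37; 37; 38; 38; 38; 40; 48]
    [:: 1; 1; 2; 3; 3; 5] 8;
  Certificate 7 [:: 15; 15; 15; 22; 28; 28; 38; 42; 42; 49; 49; 49; 49] [:: 1; 2; 2; 2; 3; 3] 7;
  Certificate 7 [:: 23; 23; 23; 23; 28; 28; 38; 41; 41; 41; 42; 42; 48] [:: 1; 1; 2; 2; 3; 4] 7;
  Certificate 7 [:: 23; 23; 27; 27; 28; 28; 38; 38; 38; 41; 41; 41; 48] [:: 1; 1; 2; 2; 3; 4] 7;
  Certificate 7 [:: 25; 25; 26; 26; 28; 28; 39; 39; 39; 39; 39; 40; 48] [:: 1; 1; 1; 3; 3; 4] 7;
  Certificate 7 [:: 29; 29; 29; 30; 30; 30; 35; 35; 35; 35; 36; 40; 48] [:: 1; 1; 2; 2; 2; 5] 7;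
  Certificate 6 [:: 15; 15; 15; 28; 28; 38; 42; 49; 49; 49; 50] [:: 1; 1; 2; 2; 2; 3] 6;
  Certificate 6 [:: 15; 15; 23; 28; 28; 38; 42; 42; 49; 49; 49] [:: 1; 1; 2; 2; 2; 3] 6;
  Certificate 6 [:: 15; 27; 27; 28; 28; 38; 38; 38; 41; 49; 49] [:: 1; 1; 2; 2; 2; 3] 6;
  Certificate 6 [:: 23; 23; 23; 23; 25; 41; 42; 42; 44; 44; 48] [:: 1; 1; 1; 2; 3; 3] 6;
  Certificate 6 [:: 23; 26; 26; 28; 28; 39; 39; 39; 41; 41; 48] [:: 1; 1; 1; 2; 3; 3] 6;
  Certificate 6 [:: 27; 27; 27; 29; 29; 37; 38; 38; 38; 40; 48] [:: 1; 1; 1; 2; 2; 4] 6;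
  Certificate 6 [:: 27; 27; 30; 30; 30; 35; 37; 37; 37; 40; 48] [:: 1; 1; 1; 2; 2; 4] 6;
  Certificate 5 [:: 15; 15; 15; 28; 44; 49; 49; 50; 50] [:: 1; 1; 1; 2; 2; 2] 5;
  Certificate 5 [:: 23; 23; 23; 25; 42; 42; 44; 44; 49] [:: 1; 1; 1; 2; 2; 2] 5;
  Certificate 5 [:: 23; 23; 27; 27; 38; 41; 44; 44; 48] [:: 1; 1; 1; 1; 2; 3] 5;
  Certificate 5 [:: 23; 30; 30; 30; 35; 37; 41; 41; 48] [:: 1; 1; 1; 1; 2; 3] 5;
  Certificate 5 [:: 26; 26; 28; 28; 39; 39; 39; 41; 49] [:: 1; 1; 1; 2; 2; 2] 5;
  Certificate 5 [:: 27; 27; 28; 28; 39; 39; 39; 40; 48] [:: 0; 1; 1; 2; 2; 3] 5;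
  Certificate 5 [:: 27; 27; 29; 29; 38; 38; 38; 41; 48] [:: 0; 1; 1; 2; 2; 3] 5;
  Certificate 5 [:: 27; 27; 29; 29; 38; 38; 38; 41; 48] [:: 1; 1; 1; 1; 2; 3] 5;
  Certificate 5 [:: 31; 31; 31; 31; 33; 34; 36; 40; 48] [:: 1; 1; 1; 1; 1; 4] 5;
  Certificate 9 [:: 27; 27; 27; 28; 28; 28; 28; 39; 39; 39; 39; 39; 41; 42; 48; 48]
    [:: 1; 1; 2; 3; 4; 5] 9;
  Certificate 4 [:: 15; 15; 15; 49; 50; 52; 56] [:: 1; 1; 1; 1; 1; 2] 4;
  Certificate 4 [:: 23; 27; 27; 38; 44; 44; 49] [:: 1; 1; 1; 1; 1; 2] 4;
  Certificate 4 [:: 23; 27; 27; 39; 44; 44; 48] [:: 0; 1; 1; 1; 2; 2] 4;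
  Certificate 4 [:: 23; 28; 28; 39; 43; 43; 48] [:: 0; 1; 1; 1; 2; 2] 4;
  Certificate 4 [:: 26; 29; 29; 39; 39; 42; 48] [:: 0; 1; 1; 1; 2; 2] 4;
  Certificate 4 [:: 27; 28; 28; 39; 39; 42; 49] [:: 1; 1; 2; 3; 3; 4] 8;
  Certificate 4 [:: 27; 29; 29; 38; 38; 42; 49] [:: 1; 1; 1; 1; 1; 2] 4;
  Certificate 4 [:: 27; 29; 30; 39; 39; 40; 48] [:: 1; 1; 1; 3; 3; 5] 8;
  Certificate 4 [:: 30; 30; 30; 35; 37; 41; 49] [:: 1; 1; 1; 1; 1; 2] 4;
  Certificate 4 [:: 31; 31; 31; 35; 36; 40; 48] [:: 0; 1; 1; 1; 1; 3] 4;
  Certificate 7 [:: 23; 23; 27; 27; 27; 39; 44; 44; 44; 44; 49; 50] [:: 1; 1; 2; 2; 3; 3] 7;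
  Certificate 7 [:: 23; 28; 28; 28; 28; 39; 39; 43; 43; 43; 49; 50] [:: 1; 1; 2; 2; 3; 3] 7;
  Certificate 7 [:: 27; 29; 30; 30; 30; 39; 39; 39; 41; 41; 48; 48] [:: 1; 1; 1; 2; 3; 4] 7;
  Certificate 7 [:: 31; 31; 31; 31; 31; 35; 37; 38; 40; 40; 48; 48] [:: 1; 1; 1; 2; 2; 5] 7;
  Certificate 3 [:: 15; 23; 39; 56; 56] [:: 0; 1; 1; 1; 1; 1] 3;
  Certificate 3 [:: 27; 27; 39; 44; 52] [:: 0; 1; 1; 1; 1; 1] 3;
  Certificate 3 [:: 28; 28; 39; 43; 51] [:: 0; 1; 1; 1; 1; 1] 3;
  Certificate 3 [:: 29; 29; 39; 42; 50] [:: 0; 1; 1; 1; 1; 1] 3;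
  Certificate 3 [:: 29; 30; 39; 43; 48] [:: 0; 0; 1; 1; 1; 2] 3;
  Certificate 3 [:: 29; 30; 39; 43; 48] [:: 1; 1; 1; 1; 3; 3] 6;
  Certificate 3 [:: 30; 30; 39; 41; 49] [:: 1; 1; 1; 2; 2; 3] 6;
  Certificate 3 [:: 31; 31; 38; 41; 48] [:: 0; 0; 1; 1; 1; 2] 3;
  Certificate 3 [:: 31; 31; 38; 41; 48] [:: 1; 1; 1; 1; 2; 4] 6;
  Certificate 3 [:: 31; 31; 39; 40; 48] [:: 1; 0; 0; 1; 1; 2] 3;
  Certificate 8 [:: 29; 30; 30; 30; 30; 39; 39; 43; 43; 44; 49; 49; 49] [:: 1; 1; 2; 2; 3; 4] 8;
  Certificate 8 [:: 31; 31; 31; 31; 31; 39; 39; 41; 42; 44; 48; 48; 48] [:: 1; 1; 1; 2; 3; 5] 8;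
  Certificate 5 [:: 23; 29; 30; 43; 43; 43; 52; 52] [:: 1; 1; 1; 1; 2; 2] 5;
  Certificate 5 [:: 27; 29; 30; 39; 39; 39; 56; 56] [:: 1; 1; 1; 1; 2; 2] 5;
  Certificate 5 [:: 30; 30; 30; 39; 43; 45; 49; 49] [:: 1; 1; 1; 1; 2; 2] 5;
  Certificate 5 [:: 30; 31; 31; 39; 42; 44; 49; 49] [:: 0; 1; 1; 1; 2; 3] 5;
  Certificate 5 [:: 31; 31; 31; 38; 42; 44; 49; 49] [:: 1; 1; 1; 1; 1; 3] 5;
  Certificate 5 [:: 31; 31; 31; 39; 43; 44; 48; 48] [:: 0; 1; 1; 1; 2; 3] 5;
  Certificate 7 [:: 29; 29; 30; 30; 39; 43; 44; 44; 51; 51; 51] [:: 1; 1; 2; 2; 2; 3] 7;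
  Certificate 7 [:: 31; 31; 31; 31; 39; 42; 44; 44; 49; 49; 50] [:: 1; 1; 1; 2; 2; 4] 7;
  Certificate 7 [:: 31; 31; 31; 31; 39; 43; 45; 46; 48; 48; 48] [:: 1; 1; 1; 1; 3; 4] 7;
  Certificate 9 [:: 31; 31; 31; 31; 31; 39; 43; 44; 44; 44; 49; 49; 50; 50]
    [:: 1; 1; 2; 2; 3; 5] 9;
  Certificate 2 [:: 30; 45; 51] [:: 1; 1; 1; 1; 1; 1] 4;
  Certificate 2 [:: 31; 39; 56] [:: 0; 1; 1; 1; 1; 2] 4;
  Certificate 2 [:: 31; 43; 52] [:: 0; 0; 0; 1; 1; 1] 2;
  Certificate 2 [:: 31; 44; 51] [:: 0; 0; 1; 0; 1; 1] 2;
  Certificate 2 [:: 31; 45; 50] [:: 1; 1; 1; 1; 2; 3] 6;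
  Certificate 2 [:: 31; 46; 49] [:: 0; 0; 1; 0; 1; 1] 2;
  Certificate 2 [:: 31; 47; 48] [:: 1; 0; 0; 0; 1; 1] 2;
  Certificate 9 [:: 31; 31; 31; 31; 45; 45; 46; 46; 51; 51; 51; 52; 56] [:: 1; 1; 2; 2; 3; 4] 9;
  Certificate 7 [:: 31; 31; 31; 45; 46; 46; 51; 51; 53; 56] [:: 1; 1; 1; 2; 2; 3] 7;
  Certificate 7 [:: 31; 31; 31; 47; 47; 47; 49; 50; 52; 56] [:: 1; 1; 1; 1; 3; 3] 7;
  Certificate 5 [:: 31; 31; 46; 46; 51; 53; 57] [:: 1; 1; 1; 1; 1; 2] 5;
  Certificate 5 [:: 31; 31; 47; 47; 51; 52; 56] [:: 0; 1; 1; 1; 2; 2] 5;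
  Certificate 8 [:: 31; 31; 31; 47; 47; 47; 51; 53; 54; 56; 56] [:: 1; 1; 1; 2; 3; 3] 8;
  Certificate 3 [:: 31; 47; 54; 57] [:: 1; 1; 1; 1; 2; 2] 6;
  Certificate 3 [:: 31; 47; 55; 56] [:: 0; 0; 1; 1; 1; 1] 3;
  Certificate 7 [:: 31; 31; 47; 47; 55; 55; 57; 58; 60] [:: 1; 1; 1; 2; 2; 2] 7;
  Certificate 4 [:: 31; 47; 55; 59; 60] [:: 0; 1; 1; 1; 1; 1] 4;
  Certificate 5 [:: 31; 47; 55; 59; 61; 62] [:: 1; 1; 1; 1; 1; 1] 5;
  Certificate 1 [:: 63] [:: 1; 0; 0; 0; 0; 0] 1].

Lemma certificates_ok : all (fun c => certificate_ok c && (cert_k c <= 9)%N) certificates.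
Proof. by vm_compute. Qed.

(* A constant, so that [vm_compute] evaluates each dual region only once. *)
Definition certificate_bounds : seq (seq nat * seq bool) :=
  [seq (cert_bins c, dual_region c) | c <- certificates].

Definition singletons_in (F : seq bool) : bool := all (fun i => nth false F (2 ^ i)%N) (iota 0 6).

Lemma closed_families_certified :
  all_closed_families
    (fun F => singletons_in F ==> has (fun I => between I.1 F I.2) certificate_bounds) 64 [::].
Proof. by vm_compute. Qed.

Lemma sorted_instance_certificate S (D : 'I_6 -> R) :
  valid_instance S D -> {homo D : i j / (i <= j)%N >-> i <= j} ->
  exists2 c, (cert_k c <= 9)%N & optimality_certificate S D (cert_k c) (size (cert_bins c)).
Proof.
move=> [_ D_ok] D_sorted.
pose fam x := feasible S D (set_of_code x).
have fam_closed x y : (x < 64)%N -> y \in shifts x -> fam x -> fam y.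
  by apply: feasible_shifts => // i; exact: ltW (D_ok i).1.
have singletons : singletons_in (mkseq fam 64).
  apply/allP => i; rewrite mem_iota add0n => /andP[_ i_lt6].
  have pow_lt64 : (2 ^ i < 64)%N by rewrite -[64%N]/(2 ^ 6)%N ltn_exp2l.
  rewrite nth_mkseq // /fam (set_of_code_pow2 (Ordinal i_lt6)) /feasible big_set1.
  exact: (D_ok _).2.
have /implyP/(_ singletons) := all_closed_familiesP fam_closed closed_families_certified.
pose c0 := Certificate 0 [::] [::] 0.
rewrite has_map => /(has_nthP c0)[j j_lt /= c_between].
have /andP[c_ok c_k9] := all_nthP c0 certificates_ok j j_lt.
by exists (nth c0 certificates j) => //; apply: certificate_optimality c_ok c_between.
Qed.

Lemma six_households_K_of_le9 S (D : 'I_6 -> R) :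
  valid_instance S D -> exists kD, is_K_of S D kD /\ (kD <= 9)%N.
Proof.
move=> D_valid; have [p p_sorted] := sorting_perm D.
have Dp_valid : valid_instance S (D \o p).
  by case: D_valid => S_gt0 D_ok; split=> // i; exact: D_ok.
have [c c_k9 cert] := sorted_instance_certificate Dp_valid p_sorted.
have [k_gt0 _ _ _] := cert.
have := certificate_K_property (certificate_relabel cert).
move=> /(exists_K_of_le k_gt0) [kD [KD le_kD]].
by exists kD; split; last exact: leq_trans le_kD c_k9.
Qed.

Definition tight_demands : seq nat := [:: 1; 1; 2; 20; 21; 22]%N.

Definition tight_D (i : 'I_6) : R := (nth 0%N tight_demands i)%:R.

Definition tight_certificate : certificate :=
  Certificate 9 [:: 27; 27; 27; 28; 28; 28; 28; 39; 39; 39; 39; 39; 41; 42; 48; 48]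
    [:: 1; 1; 2; 3; 4; 5] 9.

Lemma tight_certificate_valid :
  certificate_ok tight_certificate &&
  between (cert_bins tight_certificate) (mkseq (fun x => code_weight tight_demands x <= 43)%N 64)
    (dual_region tight_certificate).
Proof. by vm_compute. Qed.

Lemma tight_instance_K_of :
  valid_instance 43%:R tight_D /\ is_K_of 43%:R tight_D 9.
Proof.
split.
  split=> [|i]; first by rewrite ltr0n.
  by rewrite ltr0n ler_nat; case: i => -[|[|[|[|[|[|]]]]]].
have /andP[c_ok c_between] := tight_certificate_valid.
apply: certificate_is_K_of (certificate_optimality _ c_ok c_between) _ => // x _.
by rewrite /feasible -natr_code_weight ler_nat.
Qed.

Theorem proposition2 : is_K_n 6 9.
Proof.
split; first exact: six_households_K_of_le9.
by exists 43%:R, tight_D; exact: tight_instance_K_of.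
Qed.
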